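(* Let $\mathcal{K}=(\Sigma,\to,\ell)$ be a Kripke structure over a set $AP$ of atoms and let $R\in\mathrm{PreOrd}(\Sigma)$. Then $R$ is a simulation on $\mathcal{K}$ if and only if $\mathrm{add}(R)$ is forward complete for $\{\mathbf{p}\mid p\in AP\}\cup\{\widetilde{\mathrm{pre}}_\to\}$.
   Context: A Kripke structure has a total transition relation $\to\subseteq\Sigma\times\Sigma$ and labeling $\ell:\Sigma\to\wp(AP)$; $\mathbf{p}=\{s\mid p\in\ell(s)\}$. $\widetilde{\mathrm{pre}}_\to(Y)=\{a\in\Sigma\mid\forall b\in\Sigma.\,(a\to b\Rightarrow b\in Y)\}$. $\mathrm{PreOrd}(\Sigma)$ is the set of reflexive transitive relations on $\Sigma$. A relation $R\subseteq\Sigma\times\Sigma$ is a simulation if whenever $sRs'$: $\ell(s')\subseteq\ell(s)$, and for every $t$ with $s\to t$ there is $t'$ with $s'\to t'$ and $tRt'$. For $R\in\mathrm{PreOrd}(\Sigma)$, $\mathrm{add}(R)$ is the abstract domain of $\wp(\Sigma)$ whose associated upper closure operator is $\mathrm{pre}_R(S)=\{x\in\Sigma\mid\exists y\in S.\,xRy\}$. A closure $\mu$ is forward complete for a constant $k\subseteq\Sigma$ if $\mu(k)=k$, and for a unary $f$ if $f(\mu(X))=\mu(f(\mu(X)))$ for all $X\subseteq\Sigma$. *)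

(* Subsets of a type T are predicates T -> Prop;
   equality of subsets is Leibniz equality of predicates
   (functional/propositional extensionality are available). *)

Definition pset (T : Type) := T -> Prop.

(* Kripke structure data: states Sigma, atoms AP, transition relation [trans],
   labeling [label s p] meaning p \in l(s). Totality is a separate predicate. *)
Definition total_rel {S : Type} (trans : S -> S -> Prop) : Prop :=
  forall s, exists t, trans s t.

Definition atom_set {S AP : Type} (label : S -> AP -> Prop) (p : AP) : pset S :=
  fun s => label s p.

Definition pre_tilde {S : Type} (trans : S -> S -> Prop) (Y : pset S) : pset S :=
  fun a => forall b, trans a b -> Y b.

Definition is_preorder {S : Type} (R : S -> S -> Prop) : Prop :=
  (forall x, R x x) /\ (forall x y z, R x y -> R y z -> R x z).

Definition is_simulation {S AP : Type} (trans : S -> S -> Prop)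
  (label : S -> AP -> Prop) (R : S -> S -> Prop) : Prop :=
  forall s s', R s s' ->
    (forall p, label s' p -> label s p) /\
    (forall t, trans s t -> exists t', trans s' t' /\ R t t').

(* pre_R(S) = { x | exists y in S, x R y }: the upper closure operator of add(R) *)
Definition pre_R {S : Type} (R : S -> S -> Prop) (X : pset S) : pset S :=
  fun x => exists y, X y /\ R x y.

Definition fwd_complete_const {S : Type} (mu : pset S -> pset S) (k : pset S) : Prop :=
  mu k = k.

Definition fwd_complete_unary {S : Type} (mu : pset S -> pset S)
  (f : pset S -> pset S) : Prop :=
  forall X : pset S, f (mu X) = mu (f (mu X)).

(* The closed sets of [pre_R R] are exactly the R-down-closed sets, so forward
   completeness for the atoms is the label condition of a simulation.  For
   [pre_tilde], forward completeness says that [pre_tilde] maps every closed set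
   [pre_R R X] to a closed set; the transfer condition gives this, and
   conversely testing it on the successors of s' yields the transfer condition. *)

From Stdlib Require Import Setoid FunctionalExtensionality PropExtensionality.

Definition down_closed {S : Type} (R : S -> S -> Prop) (X : pset S) : Prop :=
  forall x y, R x y -> X y -> X x.

Definition transfers {S : Type} (trans R : S -> S -> Prop) : Prop :=
  forall s s' t, R s s' -> trans s t -> exists t', trans s' t' /\ R t t'.

Lemma pset_ext {S : Type} (X Y : pset S) : (forall x, X x <-> Y x) -> X = Y.
Proof.
  intros HXY. apply functional_extensionality; intros x.
  apply propositional_extensionality, HXY.
Qed.

Section PreRClosure.

Variables (S : Type) (R : S -> S -> Prop).
Hypothesis R_refl : forall x, R x x.
Hypothesis R_trans : forall x y z, R x y -> R y z -> R x z.

Lemma pre_R_extensive (X : pset S) x : X x -> pre_R R X x.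
Proof. intros Hx. exists x. split; [exact Hx | apply R_refl]. Qed.

Lemma pre_R_down_closed (X : pset S) : down_closed R (pre_R R X).
Proof.
  intros x y Hxy [z [Hz Hyz]]. exists z. split; [exact Hz | eapply R_trans; eauto].
Qed.

Lemma pre_R_fixed_iff (X : pset S) : pre_R R X = X <-> down_closed R X.
Proof.
  split.
  - intros HX. rewrite <- HX. apply pre_R_down_closed.
  - intros Hdown. apply pset_ext; intros x. split.
    + intros [y [Hy Hxy]]. exact (Hdown x y Hxy Hy).
    + apply pre_R_extensive.
Qed.

Lemma pre_tilde_down_closed (trans : S -> S -> Prop) (Y : pset S) :
  transfers trans R -> down_closed R Y -> down_closed R (pre_tilde trans Y).
Proof.
  intros Htransfer Hdown s s' Hss' Hs' t Hst.
  destruct (Htransfer s s' t Hss' Hst) as [t' [Hs't' Htt']].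
  exact (Hdown t t' Htt' (Hs' t' Hs't')).
Qed.

Lemma fwd_complete_pre_tilde_iff (trans : S -> S -> Prop) :
  fwd_complete_unary (pre_R R) (pre_tilde trans) <-> transfers trans R.
Proof.
  split.
  - intros Hcomplete s s' t Hss' Hst.
    set (post_s' := trans s').
    assert (Hs' : pre_tilde trans (pre_R R post_s') s').
    { intros b Hb. apply pre_R_extensive, Hb. }
    assert (Hs : pre_tilde trans (pre_R R post_s') s).
    { rewrite (Hcomplete post_s'). exists s'. split; [exact Hs' | exact Hss']. }
    destruct (Hs t Hst) as [t' [Hs't' Htt']]. exists t'. split; assumption.
  - intros Htransfer X. symmetry. apply pre_R_fixed_iff.
    apply pre_tilde_down_closed; [exact Htransfer | apply pre_R_down_closed].
Qed.

End PreRClosure.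

Lemma is_simulation_iff {S AP : Type} (trans : S -> S -> Prop)
  (label : S -> AP -> Prop) (R : S -> S -> Prop) :
  is_simulation trans label R <->
  (forall p, down_closed R (atom_set label p)) /\ transfers trans R.
Proof.
  split.
  - intros Hsim. split.
    + intros p s s' Hss'. exact (proj1 (Hsim s s' Hss') p).
    + intros s s' t Hss'. exact (proj2 (Hsim s s' Hss') t).
  - intros [Hatoms Htransfer] s s' Hss'. split.
    + intros p. exact (Hatoms p s s' Hss').
    + intros t. exact (Htransfer s s' t Hss').
Qed.

Theorem theorem7p8 (Sigma AP : Type) (trans : Sigma -> Sigma -> Prop)
  (label : Sigma -> AP -> Prop) (R : Sigma -> Sigma -> Prop) :
  total_rel trans ->
  is_preorder R ->
  (is_simulation trans label R <->
   ((forall p : AP, fwd_complete_const (pre_R R) (atom_set label p)) /\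
    fwd_complete_unary (pre_R R) (pre_tilde trans))).
Proof.
  intros _ [R_refl R_trans].
  unfold fwd_complete_const.
  rewrite is_simulation_iff, fwd_complete_pre_tilde_iff by assumption.
  setoid_rewrite (pre_R_fixed_iff Sigma R R_refl R_trans). reflexivity.
Qed.
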